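(* In the deterministic generalized top-$k$ selective gossip setting described in the context (with $G$ connected), let $\{a,b\}\in E$. Then for every candidate $j\notin S^\infty_{ab}$ and every agent $i\in[m]$, $X_{ij}(\infty)\le\alpha_{ab}$.
   Context: Fix integers $m\ge2$, $n\ge1$, $k\in[n]$. For $v\in\mathbb{R}^n$ let $\sigma$ be a permutation of $[n]$ with $v_{\sigma(1)}\ge\cdots\ge v_{\sigma(n)}$ and set $T_k(v)=\{j\in[n]: v_j\ge v_{\sigma(k)}\}$ (so $|T_k(v)|\ge k$). Let $\{i_1(t),i_2(t)\}_{t\ge0}$ be a deterministic sequence of unordered pairs of distinct agents in $[m]$, and let $E$ be the set of pairs $\{a,b\}$ with $\{i_1(t),i_2(t)\}=\{a,b\}$ for infinitely many $t$; assume the graph $G=([m],E)$ is connected. Let $X(0)\in\mathbb{R}^{m\times n}$ and define $X(t)$ by: $S(t)=T_k(X_{i_1(t)}(t))\cup T_k(X_{i_2(t)}(t))$ (where $X_i(t)$ is row $i$), $X_{ij}(t+1)=\tfrac12(X_{i_1(t)j}(t)+X_{i_2(t)j}(t))$ if $i\in\{i_1(t),i_2(t)\}$ and $j\in S(t)$, and $X_{ij}(t+1)=X_{ij}(t)$ otherwise. The limit $X(\infty)=\lim_{t\to\infty}X(t)$ exists. For $\{a,b\}\in E$ let $\beta_{ab}(s)$ be the $s$-th time $t$ with $\{i_1(t),i_2(t)\}=\{a,b\}$, let $S^\infty_{ab}=\bigcap_{t\ge0}\bigcup_{s\ge t}S(\beta_{ab}(s))$ be the set of candidates discussed by $a,b$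 infinitely often, and $\alpha_{ab}=\min_{j\in S^\infty_{ab}}X_{aj}(\infty)$ (which also equals $\min_{j\in S^\infty_{ab}}X_{bj}(\infty)$). *)

From Stdlib Require Import Reals Lra Lia Relations.
Open Scope R_scope.

(* Conventions: agents are 0..m-1, candidates are 0..n-1 (0-indexed).
   A matrix/trajectory is given as a function of naturals; entries outside
   the index ranges are irrelevant. *)

Definition sorting_perm (n : nat) (v : nat -> R) (sigma : nat -> nat) : Prop :=
  (forall p, (p < n)%nat -> (sigma p < n)%nat) /\
  (forall p q, (p < n)%nat -> (q < n)%nat -> sigma p = sigma q -> p = q) /\
  (forall p q, (p < q)%nat -> (q < n)%nat -> v (sigma p) >= v (sigma q)).

(* T_k(v) = { j in [n] : v_j >= v_{sigma(k)} } (paper is 1-indexed, so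
   sigma(k) of the paper is sigma (k-1) here).  The value v_{sigma(k)} does
   not depend on the choice of sorting permutation. *)
Definition Tk (n k : nat) (v : nat -> R) (j : nat) : Prop :=
  (j < n)%nat /\
  exists sigma, sorting_perm n v sigma /\ v j >= v (sigma (k - 1)%nat).

Definition pair_is (i1 i2 : nat -> nat) (t a b : nat) : Prop :=
  (i1 t = a /\ i2 t = b) \/ (i1 t = b /\ i2 t = a).

Definition inE (i1 i2 : nat -> nat) (a b : nat) : Prop :=
  forall T : nat, exists t : nat, (T <= t)%nat /\ pair_is i1 i2 t a b.

Definition connected (m : nat) (i1 i2 : nat -> nat) : Prop :=
  forall a b, (a < m)%nat -> (b < m)%nat ->
    clos_refl_trans nat (fun x y => inE i1 i2 x y) a b.

Definition St (n k : nat) (X : nat -> nat -> nat -> R) (i1 i2 : nat -> nat)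
  (t j : nat) : Prop :=
  Tk n k (X t (i1 t)) j \/ Tk n k (X t (i2 t)) j.

(* X is the trajectory of the generalized top-k selective gossip dynamics
   started from X 0 (row i of X t is (fun j => X t i j)). *)
Definition gossip_dynamics (m n k : nat) (i1 i2 : nat -> nat)
  (X : nat -> nat -> nat -> R) : Prop :=
  forall t i j, (i < m)%nat -> (j < n)%nat ->
    (((i = i1 t \/ i = i2 t) /\ St n k X i1 i2 t j) ->
       X (S t) i j = (X t (i1 t) j + X t (i2 t) j) / 2) /\
    (~ ((i = i1 t \/ i = i2 t) /\ St n k X i1 i2 t j) ->
       X (S t) i j = X t i j).

(* S^infty_{ab}: candidates in S(beta_ab(s)) for infinitely many s, i.e.
   in S(t) for infinitely many times t at which the pair {a,b} interacts. *)
Definition Sinf (n k : nat) (X : nat -> nat -> nat -> R) (i1 i2 : nat -> nat)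
  (a b j : nat) : Prop :=
  (j < n)%nat /\
  forall T : nat, exists t : nat,
    (T <= t)%nat /\ pair_is i1 i2 t a b /\ St n k X i1 i2 t j.

Definition is_min_on (P : nat -> Prop) (f : nat -> R) (alpha : R) : Prop :=
  (exists j, P j /\ f j = alpha) /\ (forall j, P j -> alpha <= f j).

From Stdlib Require Import Reals Lra Lia Relations List Sorted Permutation
  ClassicalEpsilon Classical.
Open Scope R_scope.

(* For a row v of length n, the k-th largest value kth_value n k v is the
   unique threshold th with fewer than k entries > th and at least k entries
   >= th; T_k(v) is exactly the set of entries >= th.  Write th(c) for the
   k-th largest value of the limit row X_c(oo).  Comparing strict and weak
   inequalities between limits with those eventually holding along the
   trajectory gives, for every edge {c,d} of E:
   (1) candidates in S^oo_cd have equal limits at c and d;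
   (2) if X_cl(oo) > th(c) then l is in S^oo_cd;
   (3) if l is in S^oo_cd then X_cl(oo) >= th(c) or X_dl(oo) >= th(d);
   (4) th(c) = th(d), by a counting argument on the top-k set of row d.
   By connectivity th is a constant, and by (1),(2),(4) the property
   X_ij(oo) > th propagates from i to a, forcing j into S^oo_ab.  Hence
   X_ij(oo) <= th, while by (1),(3),(4) every candidate of S^oo_ab (a nonempty
   set) has limit >= th at a, so its minimum alpha_ab is >= th as well. *)

Definition card_below (n : nat) (P : nat -> Prop) : nat :=
  length (filter (fun l => if excluded_middle_informative (P l) then true else false)
    (seq 0 n)).

Lemma in_card_below n (P : nat -> Prop) l :
  In l (filter (fun l => if excluded_middle_informative (P l) then true else false)
    (seq 0 n)) <-> (l < n)%nat /\ P l.
Proof.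
  rewrite filter_In, in_seq.
  destruct (excluded_middle_informative (P l)) as [HP|HnP]; split;
    intros [H1 H2]; try discriminate; repeat split; auto; try lia; tauto.
Qed.

Lemma card_below_mono n (P Q : nat -> Prop) :
  (forall l, (l < n)%nat -> P l -> Q l) -> (card_below n P <= card_below n Q)%nat.
Proof.
  intros H. apply NoDup_incl_length.
  - apply NoDup_filter, seq_NoDup.
  - intros x Hx. apply in_card_below in Hx. apply in_card_below. intuition.
Qed.

Lemma NoDup_map_seq (f : nat -> nat) r :
  (forall p q, (p < r)%nat -> (q < r)%nat -> f p = f q -> p = q) ->
  NoDup (map f (seq 0 r)).
Proof.
  intros H. apply FinFun.Injective_map_NoDup_in; [|apply seq_NoDup].
  intros x y Hx Hy. apply in_seq in Hx, Hy. apply H; lia.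
Qed.

Lemma card_below_ge_inj n r (P : nat -> Prop) (f : nat -> nat) :
  (forall p, (p < r)%nat -> (f p < n)%nat /\ P (f p)) ->
  (forall p q, (p < r)%nat -> (q < r)%nat -> f p = f q -> p = q) ->
  (r <= card_below n P)%nat.
Proof.
  intros Hf Hinj.
  replace r with (length (map f (seq 0 r))) at 1 by (rewrite length_map, length_seq; auto).
  apply NoDup_incl_length; [apply NoDup_map_seq; auto|].
  intros x Hx. apply in_map_iff in Hx. destruct Hx as [p [<- Hp]]. apply in_seq in Hp.
  apply in_card_below, Hf. lia.
Qed.

Lemma card_below_le_img n r (P : nat -> Prop) (f : nat -> nat) :
  (forall l, (l < n)%nat -> P l -> exists p, (p < r)%nat /\ f p = l) ->
  (card_below n P <= r)%nat.
Proof.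
  intros H.
  replace r with (length (map f (seq 0 r))) by (rewrite length_map, length_seq; auto).
  apply NoDup_incl_length; [apply NoDup_filter, seq_NoDup|].
  intros x Hx. apply in_card_below in Hx. destruct (H x) as [p [Hp Hfp]]; try tauto.
  apply in_map_iff. exists p. split; auto. apply in_seq. lia.
Qed.

Lemma card_below_pos n (P : nat -> Prop) :
  (1 <= card_below n P)%nat -> exists l, (l < n)%nat /\ P l.
Proof.
  intros H. apply NNPP. intro Hno.
  assert (card_below n P <= 0)%nat by
    (apply card_below_le_img with (f := fun x => x); intros l Hl HP; exfalso; eauto).
  lia.
Qed.

Lemma sorting_perm_surj n v sigma : sorting_perm n v sigma ->
  forall l, (l < n)%nat -> exists p, (p < n)%nat /\ sigma p = l.
Proof.
  intros [Hrange [Hinj _]] l Hl.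
  assert (Hincl : incl (seq 0 n) (map sigma (seq 0 n))).
  { apply NoDup_length_incl; [apply NoDup_map_seq; auto|rewrite length_map; auto|].
    intros x Hx. apply in_map_iff in Hx. destruct Hx as [p [<- Hp]]. apply in_seq in Hp.
    apply in_seq. specialize (Hrange p). lia. }
  assert (Hin : In l (map sigma (seq 0 n))) by (apply Hincl, in_seq; lia).
  apply in_map_iff in Hin. destruct Hin as [p [Hp Hseq]]. apply in_seq in Hseq.
  exists p. split; [lia|auto].
Qed.

Definition kth_threshold (n k : nat) (v : nat -> R) (th : R) : Prop :=
  (card_below n (fun l => (v l > th)%R) < k)%nat /\ (k <= card_below n (fun l => (v l >= th)%R))%nat.

Lemma sorting_kth_threshold n k v sigma : (1 <= k)%nat -> (k <= n)%nat ->
  sorting_perm n v sigma -> kth_threshold n k v (v (sigma (k - 1)%nat)).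
Proof.
  intros Hk1 Hkn Hs. pose proof Hs as [Hrange [Hinj Hsorted]]. split.
  - enough (card_below n (fun l => (v l > v (sigma (k - 1)%nat))%R) <= k - 1)%nat by lia.
    apply card_below_le_img with (f := sigma). intros l Hl Hv.
    destruct (sorting_perm_surj n v sigma Hs l Hl) as [p [Hp <-]]. exists p. split; auto.
    destruct (Nat.lt_ge_cases p (k - 1)) as [|Hge]; auto.
    destruct (Nat.eq_dec p (k - 1)) as [->|Hne]; [lra|].
    specialize (Hsorted (k - 1)%nat p ltac:(lia) Hp). lra.
  - apply card_below_ge_inj with (f := sigma).
    + intros p Hp. split; [apply Hrange; lia|].
      destruct (Nat.eq_dec p (k - 1)) as [->|Hne]; [lra|]. apply Hsorted; lia.
    + intros p q Hp Hq. apply Hinj; lia.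
Qed.

Lemma kth_threshold_unique n k v th1 th2 :
  kth_threshold n k v th1 -> kth_threshold n k v th2 -> th1 = th2.
Proof.
  intros [Above1 AtLeast1] [Above2 AtLeast2].
  destruct (Rtotal_order th1 th2) as [Hlt|[Heq|Hgt]]; auto.
  - assert (card_below n (fun l => (v l >= th2)%R) <= card_below n (fun l => (v l > th1)%R))%nat
      by (apply card_below_mono; intros; lra). lia.
  - assert (card_below n (fun l => (v l >= th1)%R) <= card_below n (fun l => (v l > th2)%R))%nat
      by (apply card_below_mono; intros; lra). lia.
Qed.

Fixpoint insert_by (v : nat -> R) (x : nat) (l : list nat) : list nat :=
  match l with
  | nil => x :: nil
  | y :: l' => if Rle_dec (v y) (v x) then x :: y :: l' else y :: insert_by v x l'
  end.

Definition sort_by (v : nat -> R) (l : list nat) : list nat := fold_right (insert_by v) nil l.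

Definition ge_by (v : nat -> R) (x y : nat) : Prop := v x >= v y.

Lemma insert_by_perm v x l : Permutation (insert_by v x l) (x :: l).
Proof.
  induction l as [|y l IH]; simpl; auto.
  destruct (Rle_dec (v y) (v x)); auto.
  eapply perm_trans; [apply perm_skip, IH|apply perm_swap].
Qed.

Lemma insert_by_sorted v x l :
  StronglySorted (ge_by v) l -> StronglySorted (ge_by v) (insert_by v x l).
Proof.
  unfold ge_by. induction l as [|y l IH]; simpl; intros Hs; [repeat constructor|].
  inversion Hs as [|? ? Htl Hhd]; subst. rewrite Forall_forall in Hhd.
  destruct (Rle_dec (v y) (v x)).
  - constructor; auto. constructor; [lra|].
    rewrite Forall_forall. intros z Hz. specialize (Hhd z Hz). lra.
  - constructor; auto. rewrite Forall_forall. intros z Hz.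
    apply (Permutation_in _ (insert_by_perm v x l)) in Hz.
    destruct Hz as [<-|Hz]; [lra|auto].
Qed.

Lemma sort_by_perm v l : Permutation (sort_by v l) l.
Proof.
  induction l; simpl; auto. eapply perm_trans; [apply insert_by_perm|auto].
Qed.

Lemma sort_by_sorted v l : StronglySorted (ge_by v) (sort_by v l).
Proof. induction l; simpl; [constructor|apply insert_by_sorted; auto]. Qed.

Lemma StronglySorted_nth v l d : StronglySorted (ge_by v) l ->
  forall p q, (p < q)%nat -> (q < length l)%nat -> v (nth p l d) >= v (nth q l d).
Proof.
  induction l as [|x l IH]; simpl; intros Hs p q Hpq Hq; [lia|].
  inversion Hs as [|? ? Htl Hhd]; subst. destruct q as [|q]; [lia|]. destruct p as [|p].
  - rewrite Forall_forall in Hhd. apply Hhd, nth_In. lia.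
  - apply IH; auto; lia.
Qed.

Definition sort_perm (n : nat) (v : nat -> R) (p : nat) : nat :=
  nth p (sort_by v (seq 0 n)) 0%nat.

Lemma sort_perm_spec n v : sorting_perm n v (sort_perm n v).
Proof.
  unfold sort_perm. set (L := sort_by v (seq 0 n)).
  assert (HP : Permutation L (seq 0 n)) by apply sort_by_perm.
  assert (HL : length L = n) by (rewrite (Permutation_length HP); apply length_seq).
  split; [|split].
  - intros p Hp. assert (Hin : In (nth p L 0%nat) (seq 0 n))
      by (eapply Permutation_in; [eauto|apply nth_In; lia]).
    apply in_seq in Hin. lia.
  - intros p q Hp Hq. apply (NoDup_nth L 0%nat); try lia.
    eapply Permutation_NoDup; [apply Permutation_sym; eauto|apply seq_NoDup].
  - intros p q Hpq Hq. apply StronglySorted_nth; [apply sort_by_sorted|lia|lia].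
Qed.

Definition kth_value (n k : nat) (v : nat -> R) : R := v (sort_perm n v (k - 1)%nat).

Section TopK.
Variables (n k : nat).
Hypothesis Hk1 : (1 <= k)%nat.
Hypothesis Hkn : (k <= n)%nat.

Lemma kth_value_spec v : kth_threshold n k v (kth_value n k v).
Proof. apply sorting_kth_threshold; auto. apply sort_perm_spec. Qed.

Lemma Tk_iff_ge v l : (l < n)%nat -> (Tk n k v l <-> v l >= kth_value n k v).
Proof.
  intros Hl. split.
  - intros [_ [sigma [Hs Hv]]].
    rewrite (kth_threshold_unique n k v _ _ (kth_value_spec v)
               (sorting_kth_threshold n k v sigma Hk1 Hkn Hs)). auto.
  - intros Hv. split; auto. exists (sort_perm n v). split; [apply sort_perm_spec|auto].
Qed.

Lemma Tk_iff_card v l : (l < n)%nat ->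
  (Tk n k v l <-> (card_below n (fun l' => (v l' > v l)%R) < k)%nat).
Proof.
  intros Hl. rewrite (Tk_iff_ge v l Hl).
  destruct (kth_value_spec v) as [Above AtLeast]. split.
  - intros Hv. eapply Nat.le_lt_trans; [|apply Above]. apply card_below_mono. intros; lra.
  - intros Hc. apply Rnot_lt_ge. intro Hlt.
    assert (card_below n (fun l' => (v l' >= kth_value n k v)%R)
            <= card_below n (fun l' => (v l' > v l)%R))%nat by (apply card_below_mono; intros; lra).
    lia.
Qed.

Lemma Tk_card v : (k <= card_below n (Tk n k v))%nat.
Proof.
  destruct (kth_value_spec v) as [_ AtLeast].
  eapply Nat.le_trans; [apply AtLeast|]. apply card_below_mono.
  intros l Hl Hv. apply Tk_iff_ge; auto.
Qed.

Lemma not_Tk_of_dominated v w l : (l < n)%nat ->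
  (forall l', (l' < n)%nat -> w l' >= kth_value n k w -> v l' > v l) -> ~ Tk n k v l.
Proof.
  intros Hl Hdom HT. apply Tk_iff_card in HT; auto.
  destruct (kth_value_spec w) as [_ AtLeast].
  assert (card_below n (fun l' => (w l' >= kth_value n k w)%R)
          <= card_below n (fun l' => (v l' > v l)%R))%nat by (apply card_below_mono; auto).
  lia.
Qed.

End TopK.

Definition eventually (P : nat -> Prop) : Prop := exists T, forall t, (T <= t)%nat -> P t.

Lemma eventually_and (P Q : nat -> Prop) :
  eventually P -> eventually Q -> eventually (fun t => P t /\ Q t).
Proof.
  intros [T1 H1] [T2 H2]. exists (max T1 T2). intros t Ht. split; [apply H1|apply H2]; lia.
Qed.

Lemma eventually_forall_below n (P : nat -> Prop) (F : nat -> nat -> Prop) :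
  (forall l, (l < n)%nat -> P l -> eventually (F l)) ->
  eventually (fun t => forall l, (l < n)%nat -> P l -> F l t).
Proof.
  induction n as [|n IH]; intros H.
  - exists 0%nat. intros. lia.
  - destruct IH as [T1 H1]; [intros l Hl HP; apply H; auto|].
    destruct (classic (P n)) as [Pn|nPn].
    + destruct (H n ltac:(lia) Pn) as [T2 H2]. exists (max T1 T2). intros t Ht l Hl HP.
      destruct (Nat.eq_dec l n) as [->|Hne]; [apply H2|apply H1]; auto; lia.
    + exists T1. intros t Ht l Hl HP.
      destruct (Nat.eq_dec l n) as [->|Hne]; [tauto|apply H1; auto; lia].
Qed.

Lemma eventually_lt u w a b : Un_cv u a -> Un_cv w b -> a < b ->
  eventually (fun t => u t < w t).
Proof.
  intros Hu Hw Hab.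
  destruct (Hu ((b - a) / 2) ltac:(lra)) as [N1 H1].
  destruct (Hw ((b - a) / 2) ltac:(lra)) as [N2 H2].
  exists (max N1 N2). intros t Ht.
  specialize (H1 t ltac:(lia)). specialize (H2 t ltac:(lia)).
  unfold R_dist in *. apply Rabs_def2 in H1. apply Rabs_def2 in H2. lra.
Qed.

Lemma limits_eq_of_frequently_eq u w a b : Un_cv u a -> Un_cv w b ->
  (forall T, exists t, (T <= t)%nat /\ u t = w t) -> a = b.
Proof.
  intros Hu Hw Hfreq.
  destruct (Rtotal_order a b) as [Hlt|[Heq|Hgt]]; auto; exfalso.
  - destruct (eventually_lt u w a b Hu Hw Hlt) as [T HT].
    destruct (Hfreq T) as [t [Ht Heq]]. specialize (HT t Ht). lra.
  - destruct (eventually_lt w u b a Hw Hu Hgt) as [T HT].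
    destruct (Hfreq T) as [t [Ht Heq]]. specialize (HT t Ht). lra.
Qed.

Lemma exists_argmin_below n (P : nat -> Prop) (f : nat -> R) :
  (exists l, (l < n)%nat /\ P l) ->
  exists l, (l < n)%nat /\ P l /\ forall l', (l' < n)%nat -> P l' -> f l <= f l'.
Proof.
  induction n as [|n IH]; intros [l [Hl HP]]; [lia|].
  destruct (classic (exists l, (l < n)%nat /\ P l)) as [Hex|Hno].
  - destruct (IH Hex) as [l0 [Hl0 [HP0 Hmin]]].
    destruct (classic (P n /\ f n < f l0)) as [[Pn Hlt]|Hnot].
    + exists n. repeat split; auto. intros l' Hl' HP'.
      destruct (Nat.eq_dec l' n) as [->|]; [lra|]. specialize (Hmin l' ltac:(lia) HP'). lra.
    + exists l0. repeat split; auto. intros l' Hl' HP'.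
      destruct (Nat.eq_dec l' n) as [->|].
      * apply Rnot_lt_le. intro. apply Hnot; auto.
      * apply Hmin; auto; lia.
  - exists n. repeat split.
    + lia.
    + destruct (Nat.eq_dec l n) as [<-|]; auto. exfalso. apply Hno. exists l. split; auto; lia.
    + intros l' Hl' HP'. destruct (Nat.eq_dec l' n) as [->|]; [lra|].
      exfalso. apply Hno. exists l'. split; auto; lia.
Qed.

Lemma pair_is_sym i1 i2 t a b : pair_is i1 i2 t a b -> pair_is i1 i2 t b a.
Proof. unfold pair_is; tauto. Qed.

Lemma inE_sym i1 i2 a b : inE i1 i2 a b -> inE i1 i2 b a.
Proof.
  intros H T. destruct (H T) as [t [Ht Hp]]. exists t. split; auto. apply pair_is_sym; auto.
Qed.

Lemma inE_eventually i1 i2 a b (P : nat -> Prop) :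
  inE i1 i2 a b -> eventually P -> exists t, pair_is i1 i2 t a b /\ P t.
Proof.
  intros HE [T HT]. destruct (HE T) as [t [Ht Hp]]. exists t. auto.
Qed.

Lemma St_of_Tk n k X i1 i2 t a b l :
  pair_is i1 i2 t a b -> Tk n k (X t a) l \/ Tk n k (X t b) l -> St n k X i1 i2 t l.
Proof. unfold St. intros [[-> ->]|[-> ->]]; tauto. Qed.

(* Eventually, whatever {a,b} discuss lies in S^oo_ab: the finitely many
   candidates outside S^oo_ab are each discussed only finitely often. *)
Lemma eventually_St_in_Sinf n k X i1 i2 a b :
  eventually (fun t => pair_is i1 i2 t a b ->
    forall l, (l < n)%nat -> St n k X i1 i2 t l -> Sinf n k X i1 i2 a b l).
Proof.
  destruct (eventually_forall_below n (fun l => ~ Sinf n k X i1 i2 a b l)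
    (fun l t => pair_is i1 i2 t a b -> ~ St n k X i1 i2 t l)) as [T HT].
  - intros l Hl HnS. apply NNPP. intros Hnev. apply HnS. split; auto. intros T.
    apply NNPP. intros Hno. apply Hnev. exists T. intros t Ht Hp HSt. apply Hno. eauto.
  - exists T. intros t Ht Hp l Hl HSt. apply NNPP. intros HnS. exact (HT t Ht l Hl HnS Hp HSt).
Qed.

(* S^oo_ab is nonempty: at each discussion at least k >= 1 candidates are in S. *)
Lemma Sinf_nonempty n k X i1 i2 a b : (1 <= k)%nat -> (k <= n)%nat ->
  inE i1 i2 a b -> exists l, (l < n)%nat /\ Sinf n k X i1 i2 a b l.
Proof.
  intros Hk1 Hkn HE.
  destruct (inE_eventually _ _ _ _ _ HE (eventually_St_in_Sinf n k X i1 i2 a b))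
    as [t [Hp Hin]].
  destruct (card_below_pos n (Tk n k (X t a))) as [l [Hl HT]].
  { pose proof (Tk_card n k Hk1 Hkn (X t a)). lia. }
  exists l. split; auto. apply Hin; auto. apply (St_of_Tk _ _ _ _ _ _ a b); auto.
Qed.

Section GossipLimit.
Variables (m n k : nat) (i1 i2 : nat -> nat).
Variables (X : nat -> nat -> nat -> R) (Y : nat -> nat -> R).
Hypothesis Hk1 : (1 <= k)%nat.
Hypothesis Hkn : (k <= n)%nat.
Hypothesis Hi1 : forall t, (i1 t < m)%nat.
Hypothesis Hi2 : forall t, (i2 t < m)%nat.
Hypothesis Hdyn : gossip_dynamics m n k i1 i2 X.
Hypothesis Hlim : forall i j, (i < m)%nat -> (j < n)%nat -> Un_cv (fun t => X t i j) (Y i j).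

Lemma pair_is_bounds t a b : pair_is i1 i2 t a b -> (a < m)%nat /\ (b < m)%nat.
Proof. intros [[<- <-]|[<- <-]]; auto. Qed.

Lemma inE_bounds a b : inE i1 i2 a b -> (a < m)%nat /\ (b < m)%nat.
Proof. intros HE. destruct (HE 0%nat) as [t [_ Hp]]. exact (pair_is_bounds t a b Hp). Qed.

(* (1) A candidate discussed infinitely often by c and d has the same limit
   at c and d, since both entries are equal right after each discussion. *)
Lemma Sinf_limits_agree c d l : Sinf n k X i1 i2 c d l -> Y c l = Y d l.
Proof.
  intros [Hl Hinf]. destruct (Hinf 0%nat) as [t0 [_ [Hp0 _]]].
  destruct (pair_is_bounds t0 c d Hp0) as [Hc Hd].
  apply (limits_eq_of_frequently_eq (fun t => X t c l) (fun t => X t d l));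
    try apply Hlim; auto.
  intros T. destruct (Hinf T) as [t [Ht [Hp HSt]]]. exists (S t). split; [lia|].
  assert (Hmember : forall i, i = c \/ i = d -> i = i1 t \/ i = i2 t)
    by (destruct Hp as [[<- <-]|[<- <-]]; tauto).
  rewrite (proj1 (Hdyn t c l Hc Hl)), (proj1 (Hdyn t d l Hd Hl)); auto.
Qed.

(* Candidates strictly above the limit threshold of row c are eventually in
   the top k of row c: everything beating them eventually is already above the
   threshold in the limit, and there are fewer than k such entries. *)
Lemma eventually_Tk_above c l : (c < m)%nat -> (l < n)%nat ->
  Y c l > kth_value n k (Y c) -> eventually (fun t => Tk n k (X t c) l).
Proof.
  intros Hc Hl Hv.
  destruct (eventually_forall_below n (fun l' => Y c l' < Y c l)
    (fun l' t => X t c l' < X t c l)) as [T HT].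
  { intros l' Hl' Hlt. exact (eventually_lt _ _ _ _ (Hlim c l' Hc Hl') (Hlim c l Hc Hl) Hlt). }
  exists T. intros t Ht. apply Tk_iff_card; auto.
  destruct (kth_value_spec n k Hk1 Hkn (Y c)) as [Above _].
  eapply Nat.le_lt_trans; [|apply Above]. apply card_below_mono.
  intros l' Hl' Hgt. destruct (Rlt_dec (Y c l') (Y c l)) as [Hlt|Hnlt]; [|lra].
  specialize (HT t Ht l' Hl' Hlt). lra.
Qed.

(* Candidates strictly below the limit threshold of row c eventually leave the
   top k of row c, being beaten by all of the (at least k) entries above it. *)
Lemma eventually_not_Tk_below c l : (c < m)%nat -> (l < n)%nat ->
  Y c l < kth_value n k (Y c) -> eventually (fun t => ~ Tk n k (X t c) l).
Proof.
  intros Hc Hl Hv.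
  destruct (eventually_forall_below n (fun l' => Y c l' >= kth_value n k (Y c))
    (fun l' t => X t c l' > X t c l)) as [T HT].
  { intros l' Hl' Hge. apply (eventually_lt _ _ _ _ (Hlim c l Hc Hl) (Hlim c l' Hc Hl')). lra. }
  exists T. intros t Ht. apply (not_Tk_of_dominated n k Hk1 Hkn _ (Y c)); auto.
Qed.

Lemma Sinf_of_above_threshold c d l : inE i1 i2 c d -> (l < n)%nat ->
  Y c l > kth_value n k (Y c) -> Sinf n k X i1 i2 c d l.
Proof.
  intros HE Hl Hv. destruct (inE_bounds c d HE) as [Hc _].
  destruct (eventually_Tk_above c l Hc Hl Hv) as [T HT].
  split; auto. intros T'. destruct (HE (max T T')) as [t [Ht Hp]].
  exists t. split; [lia|]. split; auto.
  apply (St_of_Tk _ _ _ _ _ _ c d); auto. left. apply HT. lia.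
Qed.

Lemma above_threshold_of_Sinf c d l : Sinf n k X i1 i2 c d l ->
  Y c l >= kth_value n k (Y c) \/ Y d l >= kth_value n k (Y d).
Proof.
  intros [Hl Hinf]. destruct (Hinf 0%nat) as [t0 [_ [Hp0 _]]].
  destruct (pair_is_bounds t0 c d Hp0) as [Hc Hd].
  apply NNPP. intros Hno.
  destruct (eventually_and _ _
    (eventually_not_Tk_below c l Hc Hl ltac:(apply Rnot_ge_lt; tauto))
    (eventually_not_Tk_below d l Hd Hl ltac:(apply Rnot_ge_lt; tauto))) as [T HT].
  destruct (Hinf T) as [t [Ht [Hp HSt]]]. destruct (HT t Ht) as [NotC NotD].
  unfold St in HSt. destruct Hp as [[E1 E2]|[E1 E2]]; rewrite E1, E2 in HSt; tauto.
Qed.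

(* (4) Along an edge {c,d} the threshold of d is at most that of c: eventually
   the top k of row d, at discussion times, consists of candidates of S^oo_cd
   at or above the threshold of d, and these have the same limit at c. *)
Lemma threshold_le_edge c d : inE i1 i2 c d ->
  kth_value n k (Y d) <= kth_value n k (Y c).
Proof.
  intros HE. destruct (inE_bounds c d HE) as [Hc Hd].
  apply Rnot_lt_le. intros Hlt.
  destruct (inE_eventually _ _ _ _ _ HE (eventually_and _ _
    (eventually_St_in_Sinf n k X i1 i2 c d)
    (eventually_forall_below n (fun l => Y d l < kth_value n k (Y d))
       (fun l t => ~ Tk n k (X t d) l) (fun l Hl Hv => eventually_not_Tk_below d l Hd Hl Hv))))
    as [t [Hp [HSinf HTk]]].
  assert (Hsub : forall l, (l < n)%nat -> Tk n k (X t d) l -> Y c l > kth_value n k (Y c)).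
  { intros l Hl HT.
    assert (HS : Sinf n k X i1 i2 c d l)
      by (apply (HSinf Hp l Hl), (St_of_Tk _ _ _ _ _ _ c d); auto).
    rewrite (Sinf_limits_agree c d l HS).
    destruct (Rlt_dec (Y d l) (kth_value n k (Y d))) as [Hbelow|]; [|lra].
    exfalso. exact (HTk l Hl Hbelow HT). }
  destruct (kth_value_spec n k Hk1 Hkn (Y c)) as [Above _].
  pose proof (Tk_card n k Hk1 Hkn (X t d)).
  pose proof (card_below_mono n _ _ Hsub). lia.
Qed.

Lemma threshold_eq_edge c d : inE i1 i2 c d -> kth_value n k (Y c) = kth_value n k (Y d).
Proof.
  intros HE. pose proof (threshold_le_edge c d HE).
  pose proof (threshold_le_edge d c (inE_sym _ _ _ _ HE)). lra.
Qed.

Lemma threshold_eq_connected x y : clos_refl_trans nat (inE i1 i2) x y ->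
  kth_value n k (Y x) = kth_value n k (Y y).
Proof.
  induction 1; [apply threshold_eq_edge; auto|auto|congruence].
Qed.

Lemma above_threshold_connected x y l : (l < n)%nat ->
  clos_refl_trans nat (inE i1 i2) x y ->
  Y x l > kth_value n k (Y x) -> Y y l > kth_value n k (Y y).
Proof.
  intros Hl H. induction H as [x y HE|x|x y z _ IH1 _ IH2]; auto.
  intros Hv. rewrite <- (threshold_eq_edge x y HE),
    <- (Sinf_limits_agree x y l (Sinf_of_above_threshold x y l HE Hl Hv)). auto.
Qed.

Lemma Sinf_above_threshold c d l : inE i1 i2 c d -> Sinf n k X i1 i2 c d l ->
  Y c l >= kth_value n k (Y c).
Proof.
  intros HE HS. destruct (above_threshold_of_Sinf c d l HS) as [Hge|Hge]; auto.
  rewrite (Sinf_limits_agree c d l HS), (threshold_eq_edge c d HE). auto.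
Qed.

End GossipLimit.

Theorem mainTheorem4
  (m n k : nat) (Hm : (2 <= m)%nat) (Hn : (1 <= n)%nat)
  (Hk1 : (1 <= k)%nat) (Hkn : (k <= n)%nat)
  (i1 i2 : nat -> nat)
  (Hi1 : forall t, (i1 t < m)%nat) (Hi2 : forall t, (i2 t < m)%nat)
  (Hdist : forall t, i1 t <> i2 t)
  (Hconn : connected m i1 i2)
  (X : nat -> nat -> nat -> R)
  (Hdyn : gossip_dynamics m n k i1 i2 X)
  (Xinf : nat -> nat -> R)
  (Hlim : forall i j, (i < m)%nat -> (j < n)%nat ->
            Un_cv (fun t => X t i j) (Xinf i j))
  (a b : nat) (Hab : inE i1 i2 a b)
  (j : nat) (Hj : (j < n)%nat) (HjS : ~ Sinf n k X i1 i2 a b j)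
  (i : nat) (Hi : (i < m)%nat) :
  exists alpha : R,
    is_min_on (Sinf n k X i1 i2 a b) (Xinf a) alpha /\ Xinf i j <= alpha.
Proof.
  destruct (inE_bounds m i1 i2 Hi1 Hi2 a b Hab) as [Ha _].
  assert (Hpath : clos_refl_trans nat (inE i1 i2) i a) by exact (Hconn i a Hi Ha).
  (* X_ij(oo) above the common threshold would propagate to a and force j
     into S^oo_ab. *)
  assert (Hij : Xinf i j <= kth_value n k (Xinf a)).
  { apply Rnot_lt_le. intros Hgt. apply HjS.
    apply (Sinf_of_above_threshold m n k i1 i2 X Xinf Hk1 Hkn Hi1 Hi2 Hlim); auto.
    apply (above_threshold_connected m n k i1 i2 X Xinf Hk1 Hkn Hi1 Hi2 Hdyn Hlim i); auto.
    rewrite (threshold_eq_connected m n k i1 i2 X Xinf Hk1 Hkn Hi1 Hi2 Hdyn Hlim i a Hpath).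
    auto. }
  destruct (exists_argmin_below n (Sinf n k X i1 i2 a b) (Xinf a)) as [l [Hl [HSl Hmin]]].
  { apply Sinf_nonempty; auto. }
  exists (Xinf a l). split.
  - split; [exists l; auto|]. intros l' HS'. apply Hmin; [apply HS'|auto].
  - pose proof (Sinf_above_threshold m n k i1 i2 X Xinf Hk1 Hkn Hi1 Hi2 Hdyn Hlim a b l Hab HSl).
    lra.
Qed.
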